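(* $\mathbf{T}^{\nabla\bullet}$ is sound and strongly complete with respect to the class of reflexive frames: for every set $\Gamma\cup\{\phi\}\subseteq\mathcal{L}(\nabla,\bullet)$, $\Gamma\vdash_{\mathbf{T}^{\nabla\bullet}}\phi$ iff for every Kripke model $\mathcal{M}$ with reflexive accessibility relation and every state $s$, $\mathcal{M},s\vDash\Gamma$ implies $\mathcal{M},s\vDash\phi$.
   Context: $\mathcal{L}(\nabla,\bullet)$: $\phi::=p\mid\neg\phi\mid\phi\land\phi\mid\nabla\phi\mid\bullet\phi$ over a nonempty set $\mathbf{P}$ of propositional variables; $\Delta\phi:=\neg\nabla\phi$, $\circ\phi:=\neg\bullet\phi$. Kripke models $\langle S,R,V\rangle$: $s\vDash\nabla\phi$ iff there are $t,u$ with $sRt$, $sRu$, $t\vDash\phi$, $u\nvDash\phi$; $s\vDash\bullet\phi$ iff $s\vDash\phi$ and there is $t$ with $sRt$, $t\nvDash\phi$. The Hilbert system $\mathbf{K}^{\nabla\bullet}$ has axioms: A0 all propositional tautologies; A1 $\bullet\phi\to\phi$; A2 $\nabla\phi\leftrightarrow\nabla\neg\phi$; A3 $\bullet(\psi\to\phi)\land\phi\to\bullet\phi$; A4 $\nabla(\phi\land\psi)\to\nabla\phi\vee\nabla\psi$; A5 $\bullet(\phi\land\psi)\to\bullet\phi\vee\bullet\psi$; A6 $\nabla\phi\to\bullet\phi\vee\bullet\neg\phi$; A7 $\bullet(\phi\to\psi)\land\bullet(\neg\phi\to\chi)\to\nabla\phi$; rules R1 $\phi/\Delta\phi$; R2 $\phi/\circ\phi$;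 R3 $\phi\leftrightarrow\psi/\Delta\phi\leftrightarrow\Delta\psi$; R4 $\phi\leftrightarrow\psi/\circ\phi\leftrightarrow\circ\psi$; MP. $\mathbf{T}^{\nabla\bullet}$ is $\mathbf{K}^{\nabla\bullet}$ plus the axiom schema AT: $\Delta\phi\land\phi\to\circ(\psi\to\phi)$. $\Gamma\vdash\phi$ means $\vdash(\gamma_1\land\dots\land\gamma_n)\to\phi$ for some finite subset of $\Gamma$. *)

From Stdlib Require Import List.
Import ListNotations.
Set Implicit Arguments.

Section Syntax.
Variable P : Type.

Inductive form : Type :=
| Var : P -> form
| Neg : form -> form
| And : form -> form -> form
| Nab : form -> form
| Bul : form -> form.

Definition Impl (a b : form) : form := Neg (And a (Neg b)).
Definition Or (a b : form) : form := Neg (And (Neg a) (Neg b)).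
Definition Iff (a b : form) : form := And (Impl a b) (Impl b a).
Definition Del (a : form) : form := Neg (Nab a).
Definition Circ (a : form) : form := Neg (Bul a).

(* Propositional truth value, treating variables and modal formulas as atoms. *)
Fixpoint tv (v : form -> bool) (a : form) : bool :=
  match a with
  | Neg b => negb (tv v b)
  | And b c => andb (tv v b) (tv v c)
  | _ => v a
  end.

Definition taut (a : form) : Prop := forall v : form -> bool, tv v a = true.

Inductive provT : form -> Prop :=
| A0 : forall a, taut a -> provT a
| A1 : forall a, provT (Impl (Bul a) a)
| A2 : forall a, provT (Iff (Nab a) (Nab (Neg a)))
| A3 : forall a b, provT (Impl (And (Bul (Impl b a)) a) (Bul a))
| A4 : forall a b, provT (Impl (Nab (And a b)) (Or (Nab a) (Nab b)))
| A5 : forall a b, provT (Impl (Bul (And a b)) (Or (Bul a) (Bul b)))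
| A6 : forall a, provT (Impl (Nab a) (Or (Bul a) (Bul (Neg a))))
| A7 : forall a b c,
    provT (Impl (And (Bul (Impl a b)) (Bul (Impl (Neg a) c))) (Nab a))
| AT : forall a b, provT (Impl (And (Del a) a) (Circ (Impl b a)))
| R1 : forall a, provT a -> provT (Del a)
| R2 : forall a, provT a -> provT (Circ a)
| R3 : forall a b, provT (Iff a b) -> provT (Iff (Del a) (Del b))
| R4 : forall a b, provT (Iff a b) -> provT (Iff (Circ a) (Circ b))
| MP : forall a b, provT (Impl a b) -> provT a -> provT b.

Definition bigAnd (g : form) (gs : list form) : form := fold_left And gs g.

(* Gamma |- phi : some finite subset of Gamma proves phi
   (the empty subset meaning |- phi). *)
Definition derivT (Gamma : form -> Prop) (a : form) : Prop :=
  provT a \/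
  exists g gs, Gamma g /\ (forall x, In x gs -> Gamma x) /\ provT (Impl (bigAnd g gs) a).

Fixpoint sat (S : Type) (R : S -> S -> Prop) (V : P -> S -> Prop) (s : S) (a : form)
  : Prop :=
  match a with
  | Var p => V p s
  | Neg b => ~ sat R V s b
  | And b c => sat R V s b /\ sat R V s c
  | Nab b => exists t u, R s t /\ R s u /\ sat R V t b /\ ~ sat R V u b
  | Bul b => sat R V s b /\ exists t, R s t /\ ~ sat R V t b
  end.

End Syntax.

(* Soundness is an induction on derivations, reflexivity being needed only for AT.
   For completeness, [Box a := a /\ ~ Bul a] is a normal modal box of T^{nabla bullet}: it is
   monotone by A3, multiplicative by A5 and closed under necessitation by R2.  With AT, both
   primitive modalities are expressible through it, [Nab a <-> ~ Box a /\ ~ Box (~ a)] and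
   [Bul a <-> a /\ ~ Box a], so the canonical model on maximal consistent sets, with [s R t] iff
   [t] contains every [a] such that [Box a] is in [s], satisfies the truth lemma; it is
   reflexive because [Box a -> a]. *)

From Stdlib Require Import List Classical ClassicalEpsilon Setoid.
From mathcomp Require classical_sets.
Import ListNotations.
Set Implicit Arguments.

Section Propositional.
Variable P : Type.
Implicit Types (a b c : form P) (L : list (form P)).

Definition imps L a := fold_right (@Impl P) a L.

Lemma tv_Impl v a b : tv v (Impl a b) = true <-> (tv v a = true -> tv v b = true).
Proof. cbn; destruct (tv v a), (tv v b); cbn; intuition congruence. Qed.

Lemma tv_imps v L a :
  tv v (imps L a) = true <-> ((forall x, In x L -> tv v x = true) -> tv v a = true).
Proof.
  induction L as [|y L IH]; cbn [imps fold_right].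
  - intuition.
  - fold (imps L a). rewrite tv_Impl, IH. firstorder congruence.
Qed.

Lemma imps_elim L b : provT (imps L b) -> Forall (@provT P) L -> provT b.
Proof. intros H HL; induction HL; [exact H | apply IHHL, (MP H); assumption]. Qed.

Lemma tv_bigAnd v g (gs : list (form P)) :
  tv v (bigAnd g gs) = true <-> forall x, In x (g :: gs) -> tv v x = true.
Proof.
  revert g. induction gs as [|y gs IH]; intros g.
  - cbn. firstorder congruence.
  - change (bigAnd g (y :: gs)) with (bigAnd (And g y) gs). rewrite IH. cbn [In tv].
    split.
    + intros H x Hx. destruct Hx as [<-|[<-|Hx]]; auto;
        specialize (H _ (or_introl eq_refl)); apply andb_prop in H; tauto.
    + intros H x [<-|Hx]; auto. apply andb_true_intro; auto.
Qed.

Lemma imps_entail L L' a b :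
  (forall v, ((forall x, In x L -> tv v x = true) -> tv v a = true) ->
     (forall x, In x L' -> tv v x = true) -> tv v b = true) ->
  provT (imps L a) -> provT (imps L' b).
Proof.
  intros H. apply MP, A0. intro v. rewrite tv_Impl, !tv_imps. apply H.
Qed.

Lemma imps_cons L a b : provT (imps (b :: L) a) <-> provT (imps L (Impl b a)).
Proof.
  split; apply imps_entail; intros v H HL.
  - rewrite tv_Impl. intros Hb. apply H. intros x [<-|Hx]; auto.
  - rewrite tv_Impl in H. cbn [In] in HL. auto.
Qed.

Lemma imps_of_provT L a : provT a -> provT (imps L a).
Proof. apply (imps_entail [] L). auto. Qed.

Lemma imps_mp L a b : provT (imps L (Impl a b)) -> provT (imps L a) -> provT (imps L b).
Proof.
  intros Hab Ha. apply (imps_elim (L := [imps L (Impl a b); imps L a])).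
  - apply A0. intro v. cbn [imps fold_right]. rewrite !tv_Impl, !tv_imps, tv_Impl. auto.
  - auto.
Qed.

End Propositional.

Arguments imps_elim {P} L {b}.

Definition Box P (a : form P) : form P := And a (Circ a).

Ltac decide_taut :=
  let v := fresh "v" in
  intro v; cbn [tv imps fold_right Impl Or Iff Del Circ Box];
  repeat match goal with
         | |- context [tv v ?x] => destruct (tv v x)
         | |- context [v ?x] => destruct (v x)
         end;
  reflexivity.

(* [derive_from [a1; ...; an]] proves [provT b] from hypotheses [provT ai] of which [b] is a
   propositional consequence. *)
Ltac derive_from L :=
  apply (imps_elim L);
  [apply A0; decide_taut | repeat apply Forall_cons; try apply Forall_nil; assumption].

Section Soundness.
Variables (P S : Type) (R : S -> S -> Prop) (V : P -> S -> Prop).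
Hypothesis R_refl : forall s, R s s.
Implicit Types a b : form P.

Lemma sat_Impl s a b : sat R V s (Impl a b) <-> (sat R V s a -> sat R V s b).
Proof. cbn [sat Impl]. split; [intros H Ha; apply NNPP; tauto | tauto]. Qed.

Lemma sat_Or s a b : sat R V s (Or a b) <-> sat R V s a \/ sat R V s b.
Proof. cbn [sat Or]. split; [intros H; apply NNPP; tauto | tauto]. Qed.

Lemma sat_Iff s a b : sat R V s (Iff a b) <-> (sat R V s a <-> sat R V s b).
Proof. unfold Iff; cbn [sat]; rewrite !sat_Impl; tauto. Qed.

Lemma sat_taut s a : taut a -> sat R V s a.
Proof.
  set (v x := if excluded_middle_informative (sat R V s x) then true else false).
  assert (tv_v : forall b, tv v b = true <-> sat R V s b).
  { induction b as [p|b IH|b IHb c IHc|b _|b _]; cbn [tv].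
    - unfold v; destruct excluded_middle_informative; intuition congruence.
    - cbn [sat]; destruct (tv v b); cbn; intuition congruence.
    - cbn [sat]; destruct (tv v b), (tv v c); cbn; intuition congruence.
    - unfold v; destruct excluded_middle_informative; intuition congruence.
    - unfold v; destruct excluded_middle_informative; intuition congruence. }
  intros Ha. apply tv_v, Ha.
Qed.

Lemma sat_imps s (L : list (form P)) a :
  sat R V s (imps L a) <-> ((forall x, In x L -> sat R V s x) -> sat R V s a).
Proof.
  induction L as [|y L IH]; cbn [imps fold_right].
  - split; [auto | intros H; apply H; intros _ []].
  - fold (imps L a). rewrite sat_Impl, IH. firstorder congruence.
Qed.

Lemma provT_sat a : provT a -> forall s, sat R V s a.
Proof.
  induction 1 as [a Ha|a|a|a b|a b|a b|a|a b c|a b|a Ha IH|a Ha IH|a b Hab IH|a b Hab IH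
                 |a b Hab IHab Ha IHa]; intros s.
  - now apply sat_taut.
  - rewrite sat_Impl; cbn [sat]; tauto.
  - rewrite sat_Iff; cbn [sat]; split; intros (t & u & Rt & Ru & Ht & Hu);
      exists u, t; repeat split; try assumption; [tauto | now apply NNPP].
  - rewrite sat_Impl; cbn [sat]. setoid_rewrite sat_Impl. firstorder.
  - rewrite sat_Impl, sat_Or; cbn [sat]. intros (t & u & Rt & Ru & Ht & Hu).
    destruct (classic (sat R V u a)); [right | left]; exists t, u; tauto.
  - rewrite sat_Impl, sat_Or; cbn [sat]. intros ((Ha & Hb) & t & Rt & Ht).
    destruct (classic (sat R V t a)); [right | left]; split; try assumption; exists t; tauto.
  - rewrite sat_Impl, sat_Or; cbn [sat]. intros (t & u & Rt & Ru & Ht & Hu).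
    destruct (classic (sat R V s a)); [left | right]; split; try assumption;
      [exists u | exists t]; tauto.
  - rewrite sat_Impl; cbn [sat]. setoid_rewrite sat_Impl. cbn [sat].
    intros ((_ & t & Rt & Ht) & (_ & u & Ru & Hu)). exists t, u. tauto.
  (* the successor falsifying [b -> a] and the reflexive loop at [s] witness [Nab a] *)
  - rewrite sat_Impl; cbn [sat Del Circ]. setoid_rewrite sat_Impl.
    intros (Hnab & Ha) (_ & t & Rt & Ht). apply Hnab. exists s, t. repeat split; auto.
  - cbn [sat Del Circ]. intros (t & u & _ & _ & _ & Hu). exact (Hu (IH u)).
  - cbn [sat Del Circ]. intros (_ & t & _ & Ht). exact (Ht (IH t)).
  - assert (E : forall t, sat R V t a <-> sat R V t b) by (intro t; apply sat_Iff, IH).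
    rewrite sat_Iff; cbn [sat Del Circ]. setoid_rewrite E. tauto.
  - assert (E : forall t, sat R V t a <-> sat R V t b) by (intro t; apply sat_Iff, IH).
    rewrite sat_Iff; cbn [sat Del Circ]. setoid_rewrite E. tauto.
  - exact (proj1 (sat_Impl s a b) (IHab s) (IHa s)).
Qed.

End Soundness.

Section Box.
Variable P : Type.
Implicit Types (a b : form P) (L : list (form P)).

Lemma bul_congr a b : provT (Iff a b) -> provT (Impl (Bul a) (Bul b)).
Proof. intros H. pose proof (R4 H). derive_from [Iff (Circ a) (Circ b)]. Qed.

(* Given [a -> b], [b] is equivalent to [(b -> a) -> a], to which A3 applies. *)
Lemma bul_antimono a b : provT (Impl a b) -> provT (Impl (And a (Bul b)) (Bul a)).
Proof.
  intros H.
  assert (E : provT (Iff b (Impl (Impl b a) a))) by derive_from [Impl a b].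
  pose proof (bul_congr E). pose proof (A3 a (Impl b a)).
  derive_from [Impl (Bul b) (Bul (Impl (Impl b a) a));
               Impl (And (Bul (Impl (Impl b a) a)) a) (Bul a)].
Qed.

Lemma box_mono a b : provT (Impl a b) -> provT (Impl (Box a) (Box b)).
Proof.
  intros H. pose proof (bul_antimono H). derive_from [Impl a b; Impl (And a (Bul b)) (Bul a)].
Qed.

Lemma box_and a b : provT (Impl (Box a) (Impl (Box b) (Box (And a b)))).
Proof. pose proof (A5 a b). derive_from [Impl (Bul (And a b)) (Or (Bul a) (Bul b))]. Qed.

Lemma box_nec a : provT a -> provT (Box a).
Proof. intros H. pose proof (R2 H). derive_from [a; Circ a]. Qed.

Lemma box_K a b : provT (Impl (Box (Impl a b)) (Impl (Box a) (Box b))).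
Proof.
  assert (H : provT (Impl (And (Impl a b) a) b)) by (apply A0; decide_taut).
  pose proof (box_mono H). pose proof (box_and (Impl a b) a).
  derive_from [Impl (Box (And (Impl a b) a)) (Box b);
               Impl (Box (Impl a b)) (Impl (Box a) (Box (And (Impl a b) a)))].
Qed.

Lemma box_imps L a : provT (imps L a) -> provT (imps (map (@Box P) L) (Box a)).
Proof.
  revert a; induction L as [|b L IH]; intros a H.
  - exact (box_nec H).
  - apply imps_cons in H. apply imps_cons.
    eapply imps_mp; [apply imps_of_provT, box_K | exact (IH _ H)].
Qed.

(* [Impl a a] plays the role of the tautology [psi] in AT. *)
Lemma bul_nab a : provT (Impl (And a (Bul a)) (Nab a)).
Proof.
  assert (E : provT (Iff a (Impl (Impl a a) a))) by (apply A0; decide_taut).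
  pose proof (bul_congr E). pose proof (AT a (Impl a a)).
  derive_from [Impl (Bul a) (Bul (Impl (Impl a a) a));
               Impl (And (Del a) a) (Circ (Impl (Impl a a) a))].
Qed.

Lemma nab_iff_not_box a : provT (Iff (Nab a) (And (Neg (Box a)) (Neg (Box (Neg a))))).
Proof.
  pose proof (A1 a). pose proof (A1 (Neg a)). pose proof (A2 a). pose proof (A6 a).
  pose proof (bul_nab a). pose proof (bul_nab (Neg a)).
  derive_from [Impl (Bul a) a; Impl (Bul (Neg a)) (Neg a); Iff (Nab a) (Nab (Neg a));
               Impl (Nab a) (Or (Bul a) (Bul (Neg a)));
               Impl (And a (Bul a)) (Nab a); Impl (And (Neg a) (Bul (Neg a))) (Nab (Neg a))].
Qed.

End Box.

Lemma incl_cons_split (T : Type) (G : T -> Prop) a L :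
  (forall x, In x L -> G x \/ x = a) -> exists L0, (forall x, In x L0 -> G x) /\ incl L (a :: L0).
Proof.
  intros HL. exists (filter (fun x => if excluded_middle_informative (G x) then true else false) L).
  split.
  - intros x Hx. apply filter_In in Hx as [_ Hx].
    destruct excluded_middle_informative; [assumption | discriminate].
  - intros x Hx. destruct (HL x Hx) as [Gx| <-]; [right | left; reflexivity].
    apply filter_In. split; [exact Hx|]. destruct excluded_middle_informative; tauto.
Qed.

Section Consistency.
Variable P : Type.
Implicit Types (a b c : form P) (G M : form P -> Prop).

Definition proves G a := exists L, (forall x, In x L -> G x) /\ provT (imps L a).
Definition consistent G := forall a, ~ proves G (And a (Neg a)).
Definition mcs G := consistent G /\ forall a, G a \/ G (Neg a).

Lemma proves_provT G a : provT a -> proves G a.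
Proof. intros H. exists []. split; [intros _ [] | exact H]. Qed.

Lemma derivT_iff_proves Gamma a : derivT Gamma a <-> proves Gamma a.
Proof.
  split.
  - intros [H|(g & gs & Hg & Hgs & H)]; [exact (proves_provT _ H)|].
    exists (g :: gs). split; [intros x [<-|Hx]; auto|].
    revert H. apply (imps_entail [bigAnd g gs]). intros v H Hall. apply H.
    intros x [<-|[]]. apply tv_bigAnd, Hall.
  - intros ([|g gs] & HL & H); [left; exact H|].
    right. exists g, gs.
    repeat split; [apply HL; left; reflexivity | intros; apply HL; right; auto |].
    revert H. apply (imps_entail _ [bigAnd g gs]). intros v H Hall. apply H.
    intros x Hx. apply (proj1 (tv_bigAnd v g gs)); [apply Hall; left; reflexivity | exact Hx].
Qed.

Lemma proves_in G a : G a -> proves G a.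
Proof. intros H. exists [a]. split; [intros x [<-|[]]; exact H | apply A0; decide_taut]. Qed.

Lemma proves_mono G M a : (forall x, G x -> M x) -> proves G a -> proves M a.
Proof. intros HGM (L & HL & H). exists L. split; auto. Qed.

Lemma proves_mp G a b : proves G (Impl a b) -> proves G a -> proves G b.
Proof.
  intros (L1 & HL1 & H1) (L2 & HL2 & H2). exists (L1 ++ L2). split.
  - intros x Hx. apply in_app_or in Hx as [Hx|Hx]; auto.
  - apply (imps_mp _ a); [revert H1 | revert H2]; apply imps_entail;
      intros v H HL; apply H; intros x Hx; apply HL, in_or_app; auto.
Qed.

Lemma proves_mp2 G a b c :
  provT (Impl a (Impl b c)) -> proves G a -> proves G b -> proves G c.
Proof. intros H Ha Hb. apply (proves_mp (proves_mp (proves_provT G H) Ha) Hb). Qed.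

Lemma proves_deduction G a b : proves (fun x => G x \/ x = a) b -> proves G (Impl a b).
Proof.
  intros (L & HL & H). destruct (incl_cons_split _ _ HL) as (L0 & HL0 & Hincl).
  exists L0. split; [exact HL0|].
  apply imps_cons. revert H. apply imps_entail. intros v H HL'. apply H.
  intros x Hx. apply HL', Hincl, Hx.
Qed.

Lemma inconsistent_add G a : ~ consistent (fun x => G x \/ x = a) -> proves G (Neg a).
Proof.
  intros Hinc. apply not_all_ex_not in Hinc as [c Hc]. apply NNPP, proves_deduction in Hc.
  refine (proves_mp (proves_provT G _) Hc). apply A0; decide_taut.
Qed.

Lemma consistent_add_neg G a : ~ proves G a -> consistent (fun x => G x \/ x = Neg a).
Proof.
  intros Ha. apply NNPP. intros Hinc. apply Ha.
  refine (proves_mp (proves_provT G _) (inconsistent_add _ Hinc)). apply A0; decide_taut.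
Qed.

Lemma mcs_proves G a : mcs G -> proves G a -> G a.
Proof.
  intros [Hcons Hmax] Ha. destruct (Hmax a) as [|Hna]; [assumption|].
  exfalso. apply (Hcons a). refine (proves_mp2 _ Ha (proves_in _ _ Hna)). apply A0; decide_taut.
Qed.

Lemma mcs_mp G a b : mcs G -> provT (Impl a b) -> G a -> G b.
Proof. intros HG H Ha. apply (mcs_proves HG), (proves_mp (proves_provT G H)), proves_in, Ha. Qed.

Lemma mcs_iff G a b : mcs G -> provT (Iff a b) -> (G a <-> G b).
Proof.
  intros HG H. split; apply (mcs_mp HG); [derive_from [Iff a b] | derive_from [Iff a b]].
Qed.

Lemma mcs_neg G a : mcs G -> (G (Neg a) <-> ~ G a).
Proof.
  intros HG. split.
  - intros Hna Ha. apply (proj1 HG a), proves_mp2 with (a := a) (b := Neg a);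
      [apply A0; decide_taut | apply proves_in; assumption ..].
  - intros Ha. destruct (proj2 HG a); tauto.
Qed.

Lemma mcs_and G a b : mcs G -> (G (And a b) <-> G a /\ G b).
Proof.
  intros HG. split.
  - intros Hab. split; refine (mcs_mp HG _ Hab); apply A0; decide_taut.
  - intros [Ha Hb]. apply (mcs_proves HG), proves_mp2 with (a := a) (b := b);
      [apply A0; decide_taut | apply proves_in; assumption ..].
Qed.

Lemma mcs_box G a : mcs G -> (G (Box a) <-> G a /\ ~ G (Bul a)).
Proof. intros HG. unfold Box, Circ. rewrite (mcs_and _ _ HG), (mcs_neg _ HG). tauto. Qed.

Lemma mcs_nab G a : mcs G -> (G (Nab a) <-> ~ G (Box a) /\ ~ G (Box (Neg a))).
Proof.
  intros HG. rewrite (mcs_iff HG (nab_iff_not_box a)), (mcs_and _ _ HG), !(mcs_neg _ HG).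
  reflexivity.
Qed.

End Consistency.

Lemma list_in_chain_union (T : Type) (G : T -> Prop) (F : (T -> Prop) -> Prop) L :
  (forall X Y, F X -> F Y -> (forall t, X t -> Y t) \/ (forall t, Y t -> X t)) ->
  (forall x, In x L -> G x \/ exists2 X, F X & X x) ->
  (forall x, In x L -> G x) \/ exists2 X, F X & forall x, In x L -> G x \/ X x.
Proof.
  intros Htot. induction L as [|y L IH]; intros HL; [left; intros _ []|].
  destruct IH as [HG|[X FX HX]]; [intros x Hx; apply HL; right; exact Hx | |].
  - destruct (HL y (or_introl eq_refl)) as [Hy|[Y FY Hy]].
    + left. intros x [<-|Hx]; auto.
    + right. exists Y; [exact FY|]. intros x [<-|Hx]; auto.
  - right. destruct (HL y (or_introl eq_refl)) as [Hy|[Y FY Hy]].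
    + exists X; [exact FX|]. intros x [<-|Hx]; auto.
    + destruct (Htot X Y FX FY) as [HXY|HYX].
      * exists Y; [exact FY|]. intros x [<-|Hx]; auto. destruct (HX x Hx); auto.
      * exists X; [exact FX|]. intros x [<-|Hx]; auto.
Qed.

(* Zorn's lemma is needed: [P] is an arbitrary type, so formulas cannot be enumerated. *)
Lemma lindenbaum P (G : form P -> Prop) : consistent G -> exists M, mcs M /\ forall x, G x -> M x.
Proof.
  intros HG.
  destruct (@classical_sets.Zorn_bigcup (form P) (fun X => consistent (fun t => G t \/ X t)))
    as [A [HA Hmax]].
  - intros F HF Htot c (L & HL & Hc).
    destruct (list_in_chain_union _ _ L Htot HL) as [HLG|[X FX HLX]].
    + apply (HG c). exists L. auto.
    + apply (HF X FX c). exists L. auto.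
  - exists (fun t => G t \/ A t). split; [split; [exact HA|] | auto].
    intros a. apply NNPP. intros Hna.
    assert (Hadd : forall b, ~ (G b \/ A b) -> proves (fun t => G t \/ A t) (Neg b)).
    { intros b Hb. apply inconsistent_add. intros Hcons.
      apply (Hmax (fun t => A t \/ t = b)).
      - split; [intros t Ht; left; exact Ht | intros Hsub; apply Hb; right; apply Hsub; auto].
      - intros c Hc. apply (Hcons c). revert Hc. apply proves_mono. tauto. }
    apply (HA (Neg a)), proves_mp2 with (a := Neg a) (b := Neg (Neg a));
      [apply A0; decide_taut | apply Hadd; tauto ..].
Qed.

Section Canonical.
Variable P : Type.
Implicit Types a b : form P.

Definition canon_state := {G : form P -> Prop | mcs G}.
Definition canon_rel (s t : canon_state) := forall a, proj1_sig s (Box a) -> proj1_sig t a.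
Definition canon_val (p : P) (s : canon_state) := proj1_sig s (Var p).

Lemma canon_rel_refl s : canon_rel s s.
Proof. intros a Ha. destruct s as [G HG]. apply (mcs_box _ HG) in Ha. apply Ha. Qed.

Lemma canon_successor s a :
  ~ proj1_sig s (Box a) -> exists t, canon_rel s t /\ ~ proj1_sig t a.
Proof.
  destruct s as [G HG]; cbn [proj1_sig]. intros Hbox.
  assert (Ha : ~ proves (fun b => G (Box b)) a).
  { intros (L & HL & H). apply Hbox, (mcs_proves HG). exists (map (@Box P) L).
    split; [|exact (box_imps _ _ H)].
    intros x Hx. apply in_map_iff in Hx as (y & <- & Hy). auto. }
  destruct (lindenbaum (consistent_add_neg Ha)) as (M & HM & HsubM).
  exists (exist _ M HM). split.
  - intros b Hb. apply HsubM. left. exact Hb.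
  - cbn [proj1_sig]. apply (mcs_neg _ HM), HsubM. right. reflexivity.
Qed.

Lemma canon_truth a s : sat canon_rel canon_val s a <-> proj1_sig s a.
Proof.
  revert s. induction a as [p|a IH|a IHa b IHb|a IH|a IH]; intros s; cbn [sat];
    destruct s as [G HG]; cbn [proj1_sig].
  - reflexivity.
  - rewrite IH, (mcs_neg _ HG). reflexivity.
  - rewrite IHa, IHb, (mcs_and _ _ HG). reflexivity.
  - rewrite (mcs_nab _ HG). split.
    + intros (t & u & Rt & Ru & Ht & Hu). rewrite IH in Ht, Hu. split.
      * intros Hbox. apply Hu, Ru, Hbox.
      * intros Hbox. destruct t as [T HT]. apply (mcs_neg _ HT) in Ht; auto. apply Rt, Hbox.
    + intros [Hbox Hbox'].
      destruct (canon_successor (exist _ G HG) _ Hbox) as (u & Ru & Hu).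
      destruct (canon_successor (exist _ G HG) _ Hbox') as ([T HT] & Rt & Ht).
      exists (exist _ T HT), u. rewrite !IH. cbn [proj1_sig] in *.
      rewrite (mcs_neg _ HT) in Ht. split; [|split]; auto. split; [apply NNPP|]; assumption.
  - setoid_rewrite IH. cbn [proj1_sig]. split.
    + intros (Ha & t & Rt & Ht). apply NNPP. intros Hbul. apply Ht, Rt.
      cbn [proj1_sig]. apply (mcs_box _ HG). auto.
    + intros Hbul. split; [apply (mcs_mp HG (A1 a)), Hbul|].
      apply canon_successor. cbn [proj1_sig]. rewrite (mcs_box _ HG). tauto.
Qed.

End Canonical.

Definition reflexive_consequence P (Gamma : form P -> Prop) phi :=
  forall (S : Type) (R : S -> S -> Prop) (V : P -> S -> Prop), (forall x, R x x) ->
  forall s, (forall psi, Gamma psi -> sat R V s psi) -> sat R V s phi.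

Lemma proves_sound P (Gamma : form P -> Prop) phi :
  proves Gamma phi -> reflexive_consequence Gamma phi.
Proof.
  intros (L & HL & H) S R V Hrefl s HGamma.
  apply (proj1 (sat_imps R V s L phi) (provT_sat R V Hrefl H s)). auto.
Qed.

Lemma proves_complete P (Gamma : form P -> Prop) phi :
  reflexive_consequence Gamma phi -> proves Gamma phi.
Proof.
  intros Hvalid. apply NNPP. intros Hphi.
  destruct (lindenbaum (consistent_add_neg Hphi)) as (M & HM & HsubM).
  set (s := exist _ M HM : canon_state P).
  assert (Hs : proj1_sig s phi).
  { apply canon_truth, Hvalid; [exact (@canon_rel_refl P) |].
    intros psi Hpsi. apply canon_truth, HsubM. left. exact Hpsi. }
  apply (mcs_neg _ HM) in Hs; [exact Hs |]. apply HsubM. right. reflexivity.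
Qed.

Theorem theorem4 (P : Type) (p0 : P) (Gamma : form P -> Prop) (phi : form P) :
  derivT Gamma phi <->
  (forall (S : Type) (R : S -> S -> Prop) (V : P -> S -> Prop),
     (forall x, R x x) ->
     forall s : S, (forall psi, Gamma psi -> sat R V s psi) -> sat R V s phi).
Proof.
  rewrite derivT_iff_proves. split; [apply proves_sound | apply proves_complete].
Qed.
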